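(* Fix $1<p<\infty$. Fix natural numbers $l_1,\dots,l_{d+1}$, let $L=\prod_{i=1}^{d+1}l_i$ and let $T=\bigcup_{i=0}^{d+1}\Lambda_i$ be an $(l_1,\dots,l_{d+1})$ interval tree. Suppose $0<\Delta,\mu<1$, $0<\nu<1$, $\Theta>0$, $M>1$, $m\in\mathbb{N}$, $\lambda>0$, and $(s_I)_{I\in T}\subset(0,\infty)$ are such that (i) for each $I\in T\setminus\Lambda_{d+1}$, $s_I\le\sum_{J^-=I}s_J$; (ii) for all $0\le j\le d$, $\max_{I\in\Lambda_j}s_I\le M\min_{I\in\Lambda_j}s_I$; (iii) $s_{[L]}^p>(1-\nu/2)\frac{\Theta^p}{\lambda^p}\bigl(\prod_{i=1}^{d+1}l_i^{p-1}\bigr)\sum_{I\in\Lambda_{d+1}}s_I^p$; (iv) $(1-\mu\Delta/M^p)^m<(1-\nu/2)\frac{\Theta^p}{\lambda^p}$. For each $0\le j<d$ let $I_j=\{I\in\Lambda_j: s_I^p\le(1-\mu)l_{j+1}^{p-1}\sum_{J^-=I}s_J^p\}$ and let $B=\{j<d:|I_j|\ge\Delta|\Lambda_j|\}$. Then $|B|\le m$.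
   Context: $[n]=\{1,\dots,n\}$. Given natural numbers $l_1,\dots,l_{k}$ with $L=\prod_{j=1}^{k}l_j$, an $(l_1,\dots,l_k)$ interval tree $T=\bigcup_{i=0}^k\Lambda_i$ is built as follows: $\Lambda_0=\{[L]\}$; if $\Lambda_i$ ($i<k$) consists of pairwise disjoint integer subintervals of $[L]$ each of cardinality $\prod_{j=i+1}^k l_j$, then each $I\in\Lambda_i$ is partitioned into $l_{i+1}$ integer subintervals of equal cardinality, and $\Lambda_{i+1}$ is the set of all these subintervals over all $I\in\Lambda_i$. For $0<j\le k$ and $J\in\Lambda_j$, $J^-$ denotes the unique $I\in\Lambda_{j-1}$ with $J\subset I$; sums $\sum_{J^-=I}$ range over the children of $I$. *)

From HB Require Import structures.
From mathcomp Require Import all_boot all_order all_algebra.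
From mathcomp Require Import reals exp.
Set Implicit Arguments. Unset Strict Implicit. Unset Printing Implicit Defensive.
Import Order.TTheory GRing.Theory Num.Theory.

(* Interval tree for (l_1,...,l_{d+1}); l : nat -> nat, only l 1 .. l (d+1) used.
   Level i (0 <= i <= d+1) consists of cnt l i = l_1*...*l_i intervals,
   each of cardinality blk l d i = l_{i+1}*...*l_{d+1}.
   The a-th interval of level i (a < cnt l i) is the integer interval
   [a * blk + 1, (a+1) * blk] (intervals listed left to right).
   Its children are the intervals (i+1, a * l_{i+1} + b), b < l_{i+1}. *)
Definition blk (l : nat -> nat) (d i : nat) : nat := \prod_(i.+1 <= j < d.+2) l j.
Definition cnt (l : nat -> nat) (i : nat) : nat := \prod_(1 <= j < i.+1) l j.

(* A family (s_I)_{I in T} is given as a function of the integer interval,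
   an integer interval {lo,...,hi} being encoded by its endpoints (lo, hi).
   sv s l d i a = s_I for I the a-th interval of level i. *)
Definition sv {R : Type} (s : nat -> nat -> R) (l : nat -> nat) (d i a : nat) : R :=
  s (a * blk l d i).+1 (a.+1 * blk l d i).

From HB Require Import structures.
From mathcomp Require Import all_boot all_order all_algebra.
From mathcomp Require Import reals exp.
From mathcomp Require Import convex hoelder interval_inference.
From mathcomp Require Import ring lra.
Import Order.TTheory GRing.Theory Num.Theory.
Local Open Scope ring_scope.

(* Let S_j be the sum of s_I^p over the j-th level of the tree. By (i) and the power-mean
   inequality (x_1 + ... + x_n)^p <= n^(p-1) (x_1^p + ... + x_n^p),
   S_j <= l_{j+1}^(p-1) S_{j+1}.
   On a level j in B the intervals of I_j lose a factor (1 - mu) on their children's share of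
   S_{j+1}, and by (ii) on level j+1 that share is at least Delta / M^p, so that
   S_j <= (1 - mu Delta / M^p) l_{j+1}^(p-1) S_{j+1}. Chaining the levels gives
   s_[L]^p <= (1 - mu Delta / M^p)^|B| (prod_i l_i^(p-1)) S_{d+1}, which contradicts (iii)
   and (iv) as soon as |B| > m. *)

Lemma ltn_block_index a b c n : (a < c)%N -> (b < n)%N -> (a * n + b < c * n)%N.
Proof.
move=> lt_ac lt_bn; apply: (leq_trans _ (leq_mul lt_ac (leqnn n))).
by rewrite mulSn addnC ltn_add2r.
Qed.

Lemma big_ord_mul {T : Type} {idx : T} (op : Monoid.law idx) (F : nat -> T) k n :
  \big[op/idx]_(a < k) \big[op/idx]_(b < n) F (a * n + b)%N =
  \big[op/idx]_(i < k * n) F i.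
Proof.
elim: k => [|k IHk]; first by rewrite big_ord0 mul0n big_ord0.
by rewrite big_ord_recr /= IHk mulSnr big_split_ord.
Qed.

Section PowerMean.
Context {R : realType} {p : R} (p_ge1 : 1 <= p).

Lemma powR_convex2 (t x y : R) : 0 <= t -> t <= 1 -> 0 <= x -> 0 <= y ->
  (t * x + (1 - t) * y) `^ p <= t * x `^ p + (1 - t) * y `^ p.
Proof.
move=> t_ge0 t_le1 x_ge0 y_ge0.
have := convex_powR p_ge1 (Itv01 t_ge0 t_le1) (x := x) (y := y).
rewrite !convRE /=; apply.
all: by rewrite classical_sets.in_setE /= in_itv /= andbT.
Qed.

Lemma powR_mean_le (x : nat -> R) n : (forall i, (i <= n)%N -> 0 <= x i) ->
  ((\sum_(i < n.+1) x i) / n.+1%:R) `^ p <= (\sum_(i < n.+1) x i `^ p) / n.+1%:R.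
Proof.
elim: n => [|n IHn] x_ge0; first by rewrite !big_ord1 !divr1.
have {}IHn := IHn (fun i le_in => x_ge0 i (leqW le_in)).
rewrite big_ord_recr [X in _ <= X / _]big_ord_recr /= -natr1.
set A := \sum_(i < n.+1) x i; set N := n.+1%:R : R.
have N_gt0 : 0 < N by rewrite ltr0n.
pose t := N / (N + 1).
have t_ge0 : 0 <= t by rewrite divr_ge0 // ?addr_ge0 // ltW.
have t_le1 : t <= 1 by rewrite ler_pdivrMr ?mul1r ?lerDl // addr_gt0.
have A_ge0 : 0 <= A by rewrite sumr_ge0 // => i _; apply: x_ge0; rewrite ltnW.
have -> : (A + x n.+1) / (N + 1) = t * (A / N) + (1 - t) * x n.+1.
  by rewrite /t; field; rewrite gt_eqF //; lra.
apply: (le_trans (powR_convex2 _ _ _ t_ge0 t_le1 _ (x_ge0 _ (leqnn _)))).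
  by rewrite divr_ge0 // ltW.
have -> : (\sum_(i < n.+1) x i `^ p + x n.+1 `^ p) / (N + 1) =
    t * ((\sum_(i < n.+1) x i `^ p) / N) + (1 - t) * x n.+1 `^ p.
  by rewrite /t; field; rewrite gt_eqF //; lra.
by rewrite lerD2r ler_wpM2l.
Qed.

Lemma powR_sum_le (x : nat -> R) n : (forall i, (i < n)%N -> 0 <= x i) ->
  (\sum_(i < n) x i) `^ p <= n%:R `^ (p - 1) * \sum_(i < n) x i `^ p.
Proof.
case: n => [|n] x_ge0.
  by rewrite !big_ord0 mulr0 powR0 // gt_eqF // (lt_le_trans ltr01).
have N_gt0 : 0 < n.+1%:R :> R by rewrite ltr0n.
have mean_ge0 : 0 <= (\sum_(i < n.+1) x i) / n.+1%:R.
  by rewrite divr_ge0 ?(ltW N_gt0) // sumr_ge0 // => i _; apply: x_ge0.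
rewrite -[\sum_(i < n.+1) x i](divfK (lt0r_neq0 N_gt0)) mulrC powRM ?(ltW N_gt0) //.
apply: (le_trans (ler_wpM2l (powR_ge0 _ _) (powR_mean_le x n x_ge0))).
rewrite -(mulr_powRB1 (ltW N_gt0)) ?(lt_le_trans ltr01) // -mulrA.
by rewrite mulrCA [_ * (_ / _)]mulrC divfK ?lt0r_neq0.
Qed.

End PowerMean.

Section Refinement.
Context {R : realType}.
Variables (p : R) (c n : nat) (x y : nat -> R).
Hypotheses (p_ge1 : 1 <= p)
  (x_ge0 : forall a, (a < c)%N -> 0 <= x a)
  (y_ge0 : forall i, (i < c * n)%N -> 0 <= y i)
  (x_le_children : forall a, (a < c)%N -> x a <= \sum_(b < n) y (a * n + b)%N).

Let p_ge0 : 0 <= p := le_trans ler01 p_ge1.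

Let children_pow_sum (a : nat) := \sum_(b < n) y (a * n + b)%N `^ p.

Lemma powR_le_children_pow_sum a : (a < c)%N ->
  x a `^ p <= n%:R `^ (p - 1) * children_pow_sum a.
Proof.
move=> lt_ac; have y_ab_ge0 b : (b < n)%N -> 0 <= y (a * n + b)%N.
  by move=> lt_bn; apply/y_ge0/ltn_block_index.
apply: (le_trans _ (powR_sum_le p_ge1 _ n y_ab_ge0)).
apply: ge0_ler_powR; rewrite ?nnegrE ?x_ge0 ?x_le_children //.
by rewrite sumr_ge0 // => b _; apply: y_ab_ge0.
Qed.

Lemma sum_children_pow_sum :
  \sum_(a < c) children_pow_sum a = \sum_(i < c * n) y i `^ p.
Proof. exact: (big_ord_mul _ (fun i => y i `^ p)). Qed.

Lemma sum_powR_le_refinement :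
  \sum_(a < c) x a `^ p <= n%:R `^ (p - 1) * \sum_(i < c * n) y i `^ p.
Proof.
rewrite -sum_children_pow_sum mulr_sumr.
by apply: ler_sum => a _; apply: powR_le_children_pow_sum.
Qed.

Variables (M mu Delta : R).
Hypotheses (M_gt0 : 0 < M) (mu_ge0 : 0 <= mu)
  (y_le_M : forall i k, (i < c * n)%N -> (k < c * n)%N -> y i <= M * y k).

Let deficient := [set a : 'I_c | x a `^ p <= (1 - mu) * n%:R `^ (p - 1) * children_pow_sum a].

Lemma sum_powR_le_M_child k : (k < c * n)%N ->
  \sum_(i < c * n) y i `^ p <= (c * n)%:R * (M `^ p * y k `^ p).
Proof.
move=> ltk; have -> : (c * n)%:R * (M `^ p * y k `^ p) = \sum_(i < c * n) M `^ p * y k `^ p.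
  by rewrite sumr_const card_ord mulr_natl.
apply: ler_sum => i _; rewrite -powRM ?(ltW M_gt0) ?y_ge0 //.
by apply: ge0_ler_powR; rewrite ?nnegrE ?mulr_ge0 ?y_ge0 ?y_le_M ?(ltW M_gt0).
Qed.

Lemma sum_powR_le_deficient_children : Delta * c%:R <= #|deficient|%:R ->
  Delta * \sum_(i < c * n) y i `^ p <= M `^ p * \sum_(a in deficient) children_pow_sum a.
Proof.
move=> many_deficient.
set S := \sum_(i < c * n) y i `^ p.
have S_ge0 : 0 <= S by rewrite sumr_ge0 // => i _; apply: powR_ge0.
have [cn0|cn_gt0] := posnP (c * n).
  rewrite /S cn0 big_ord0 mulr0 mulr_ge0 ?powR_ge0 // sumr_ge0 // => a _.
  by rewrite sumr_ge0 // => b _; apply: powR_ge0.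
have cnR_gt0 : 0 < (c * n)%:R :> R by rewrite ltr0n.
rewrite -(ler_pM2l cnR_gt0).
(* by [y_le_M], each of the #|deficient| * n children of deficient intervals has
   y^p >= S / (c n M^p) *)
have children_large : (#|deficient| * n)%:R * S <=
    (c * n)%:R * (M `^ p * \sum_(a in deficient) children_pow_sum a).
  have -> : (#|deficient| * n)%:R * S = \sum_(a in deficient) \sum_(b < n) S.
    by rewrite !sumr_const card_ord -mulrnA mulnC mulr_natl.
  rewrite /children_pow_sum !mulr_sumr; apply: ler_sum => a _; rewrite !mulr_sumr.
  by apply: ler_sum => b _; apply/sum_powR_le_M_child/ltn_block_index.
apply: le_trans children_large; rewrite mulrA; apply: ler_wpM2r => //.
by rewrite !natrM mulrAC; apply: ler_wpM2r; rewrite // mulrC.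
Qed.

Lemma sum_powR_le_refinement_deficient : Delta * c%:R <= #|deficient|%:R ->
  \sum_(a < c) x a `^ p <=
    (1 - mu * Delta / M `^ p) * (n%:R `^ (p - 1) * \sum_(i < c * n) y i `^ p).
Proof.
move=> many_deficient; have Mp_gt0 : 0 < M `^ p by apply: powR_gt0.
set q := n%:R `^ (p - 1); set S := \sum_(i < c * n) y i `^ p.
set T := \sum_(a in deficient) children_pow_sum a.
have le_sub : \sum_(a < c) x a `^ p <= q * S - mu * q * T.
  rewrite /S -sum_children_pow_sum /T [X in mu * q * X]big_mkcond /=.
  rewrite !mulr_sumr -sumrB.
  apply: ler_sum => a _; case: ifP => [|_]; last first.
    by rewrite mulr0 subr0; apply: powR_le_children_pow_sum.
  by rewrite inE => /le_trans; apply; rewrite !mulrBl mul1r.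
apply: (le_trans le_sub).
have -> : (1 - mu * Delta / M `^ p) * (q * S) = q * S - mu * q * (Delta * S / M `^ p).
  by ring.
rewrite lerD2l lerN2; apply: ler_wpM2l; first by rewrite mulr_ge0 ?powR_ge0.
by rewrite ler_pdivrMr // [X in _ <= X]mulrC; apply: sum_powR_le_deficient_children.
Qed.

End Refinement.

Lemma ler_chain_prod {R : numDomainType} (r : R) (u w : nat -> R) (b : nat -> bool) k :
  0 <= r -> (forall j, (j < k)%N -> 0 <= w j) ->
  (forall j, (j < k)%N -> u j <= r ^+ b j * (w j * u j.+1)) ->
  u 0 <= r ^+ (\sum_(j < k) b j) * (\prod_(j < k) w j) * u k.
Proof.
move=> r_ge0; elim: k => [|k IHk] w_ge0 u_step.
  by rewrite !big_ord0 expr0 !mul1r.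
have {}IHk := IHk (fun j ltjk => w_ge0 j (leqW ltjk)) (fun j ltjk => u_step j (leqW ltjk)).
apply: (le_trans IHk); rewrite !big_ord_recr /= exprD.
set coef := r ^+ (\sum_(j < k) b j) * \prod_(j < k) w j.
have -> : r ^+ (\sum_(j < k) b j) * r ^+ b k * (\prod_(j < k) w j * w k) * u k.+1 =
    coef * (r ^+ b k * (w k * u k.+1)) by rewrite /coef; ring.
apply: ler_wpM2l (u_step k (ltnSn k)).
by rewrite mulr_ge0 ?exprn_ge0 // prodr_ge0 // => j _; apply/w_ge0/leqW.
Qed.

Lemma cnt0 (l : nat -> nat) : cnt l 0 = 1%N.
Proof. by rewrite /cnt big_geq. Qed.

Lemma cntS (l : nat -> nat) j : cnt l j.+1 = (cnt l j * l j.+1)%N.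
Proof. by rewrite /cnt big_nat_recr. Qed.

Section IntervalTree.
Context {R : realType}.
Variables (p M mu Delta : R) (d : nat) (l : nat -> nat) (s : nat -> nat -> R).
Hypotheses (p_ge1 : 1 <= p) (M_gt0 : 0 < M) (mu_ge0 : 0 <= mu)
  (s_ge0 : forall i a, (i <= d.+1)%N -> (a < cnt l i)%N -> 0 <= sv s l d i a)
  (s_le_children : forall i a, (i <= d)%N -> (a < cnt l i)%N ->
     sv s l d i a <= \sum_(b < l i.+1) sv s l d i.+1 (a * l i.+1 + b))
  (s_le_M : forall j a b, (j <= d)%N -> (a < cnt l j)%N -> (b < cnt l j)%N ->
     sv s l d j a <= M * sv s l d j b).

Definition level_pow_sum j := \sum_(a < cnt l j) sv s l d j a `^ p.

Definition deficient_intervals j := [set a : 'I_(cnt l j) | sv s l d j a `^ p <=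
  (1 - mu) * (l j.+1)%:R `^ (p - 1) * \sum_(b < l j.+1) sv s l d j.+1 (a * l j.+1 + b) `^ p].

Definition deficient_level j := Delta * (cnt l j)%:R <= #|deficient_intervals j|%:R.

Lemma level_pow_sum_le j : (j <= d)%N ->
  level_pow_sum j <= (l j.+1)%:R `^ (p - 1) * level_pow_sum j.+1.
Proof.
move=> le_jd; rewrite /level_pow_sum cntS.
apply: sum_powR_le_refinement => // [a|i|a] lt_a.
- exact/s_ge0/lt_a/leqW.
- by apply: s_ge0; rewrite ?cntS.
- exact: s_le_children.
Qed.

Lemma level_pow_sum_le_deficient j : (j < d)%N -> deficient_level j ->
  level_pow_sum j <= (1 - mu * Delta / M `^ p) * ((l j.+1)%:R `^ (p - 1) * level_pow_sum j.+1).
Proof.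
move=> lt_jd deficient; rewrite /level_pow_sum cntS.
apply: sum_powR_le_refinement_deficient => // [a|i|a|i k] lt_a.
- exact/s_ge0/lt_a/leqW/ltnW.
- by apply: s_ge0; rewrite ?cntS // ltnW.
- by apply: s_le_children; rewrite // ltnW.
- by move=> lt_k; apply: s_le_M; rewrite ?cntS.
Qed.

Lemma root_pow_le_deficient_levels : 0 <= 1 - mu * Delta / M `^ p ->
  sv s l d 0 0 `^ p <= (1 - mu * Delta / M `^ p) ^+ #|[set j : 'I_d | deficient_level j]|
    * (\prod_(1 <= i < d.+2) (l i)%:R `^ (p - 1) * level_pow_sum d.+1).
Proof.
set r := 1 - _ => r_ge0.
pose w j := (l j.+1)%:R `^ (p - 1).
have level_step j : (j < d)%N ->
    level_pow_sum j <= r ^+ deficient_level j * (w j * level_pow_sum j.+1).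
  move=> lt_jd; case: (boolP (deficient_level j)) => [deficient|_].
    by rewrite expr1; apply: level_pow_sum_le_deficient.
  by rewrite mul1r; apply/level_pow_sum_le/ltnW.
have card_deficient : #|[set j : 'I_d | deficient_level j]| = (\sum_(j < d) deficient_level j)%N.
  rewrite -sum1dep_card big_mkcond; apply: eq_bigr => j _.
  by case: (deficient_level j).
have root_sum : level_pow_sum 0 = sv s l d 0 0 `^ p by rewrite /level_pow_sum cnt0 big_ord1.
rewrite -root_sum card_deficient big_add1 big_mkord big_ord_recr /= -!mulrA.
apply: (le_trans (ler_chain_prod _ _ w _ d r_ge0 (fun j _ => powR_ge0 _ _) level_step)).
rewrite -mulrA; apply/ler_wpM2l/ler_wpM2l; rewrite ?exprn_ge0 ?prodr_ge0 //.
  by move=> j _; apply: powR_ge0.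
exact: level_pow_sum_le.
Qed.

End IntervalTree.

Arguments root_pow_le_deficient_levels {R p M mu Delta d l s}.

Theorem lemma3p5 (R : realType) (p : R) (d : nat) (l : nat -> nat)
  (Delta mu nu Theta M lam : R) (m : nat) (s : nat -> nat -> R) :
  1 < p ->
  (forall j, (1 <= j <= d.+1)%N -> (0 < l j)%N) ->
  0 < Delta < 1 -> 0 < mu < 1 -> 0 < nu < 1 -> 0 < Theta -> 1 < M -> 0 < lam ->
  (* s_I in (0, oo) for all I in T *)
  (forall i a, (i <= d.+1)%N -> (a < cnt l i)%N -> 0 < sv s l d i a) ->
  (* (i) *)
  (forall i a, (i <= d)%N -> (a < cnt l i)%N ->
     sv s l d i a <= \sum_(b < l i.+1) sv s l d i.+1 (a * l i.+1 + b)) ->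
  (* (ii) max_{I in Lambda_j} s_I <= M min_{I in Lambda_j} s_I *)
  (forall j a b, (j <= d)%N -> (a < cnt l j)%N -> (b < cnt l j)%N ->
     sv s l d j a <= M * sv s l d j b) ->
  (* (iii) *)
  sv s l d 0 0 `^ p >
    (1 - nu / 2) * (Theta `^ p / lam `^ p)
    * (\prod_(1 <= i < d.+2) (l i)%:R `^ (p - 1))
    * (\sum_(a < cnt l d.+1) sv s l d d.+1 a `^ p) ->
  (* (iv) *)
  (1 - mu * Delta / M `^ p) ^+ m < (1 - nu / 2) * (Theta `^ p / lam `^ p) ->
  (#|[set j : 'I_d |
      ((#|[set a : 'I_(cnt l j) |
          sv s l d j a `^ p <=
            (1 - mu) * (l j.+1)%:R `^ (p - 1)
            * \sum_(b < l j.+1) sv s l d j.+1 (a * l j.+1 + b) `^ p]|)%:R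
      >= Delta * (cnt l j)%:R)%R]| <= m)%N.
Proof.
move=> p_gt1 _ /andP[Delta_gt0 Delta_lt1] /andP[mu_gt0 mu_lt1] _ _ M_gt1 _.
move=> s_gt0 s_le_children s_le_M root_large decay_small.
have p_ge1 := ltW p_gt1; have M_gt0 := lt_trans ltr01 M_gt1.
have s_ge0 i a (le_id : (i <= d.+1)%N) (lt_a : (a < cnt l i)%N) := ltW (s_gt0 i a le_id lt_a).
have Mp_ge1 : 1 <= M `^ p.
  by rewrite -(powRr0 M) (ler_powR (ltW M_gt1)) // (le_trans ler01 p_ge1).
set r := 1 - mu * Delta / M `^ p.
have r_ge0 : 0 <= r.
  rewrite subr_ge0 ler_pdivrMr ?mul1r ?(lt_le_trans ltr01 Mp_ge1) //.
  by apply: le_trans Mp_ge1; rewrite mulr_ile1 // ltW.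
have r_le1 : r <= 1 by rewrite gerBl divr_ge0 ?mulr_ge0 ?powR_ge0 // ltW.
change (#|[set j : 'I_d | deficient_level p mu Delta d l s j]| <= m)%N.
have := root_pow_le_deficient_levels p_ge1 M_gt0 (ltW mu_gt0) s_ge0 s_le_children s_le_M r_ge0.
set N := #|[set j : 'I_d | _]| => root_le; rewrite leqNgt; apply/negP => lt_m_N.
have tree_ge0 : 0 <= \prod_(1 <= i < d.+2) (l i)%:R `^ (p - 1) * level_pow_sum p d l s d.+1.
  by rewrite mulr_ge0 ?prodr_ge0 ?sumr_ge0 // => *; apply: powR_ge0.
have rN_le : r ^+ N <= r ^+ m := ler_wiXn2l r_ge0 r_le1 (ltnW lt_m_N).
move: root_large; rewrite -mulrA => root_large.
have := le_trans root_le (ler_wpM2r tree_ge0 (le_trans rN_le (ltW decay_small))).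
by move/le_lt_trans/(_ root_large); rewrite ltxx.
Qed.
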